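(* Let $a,b\ge 0$ and $0\le v\le 1$. Let $g:[0,1]\to\mathbb{R}$ be non-decreasing on $[0,1]$ with $g(1)\neq g(0)$. Then \[ a\sharp_v b+\frac{4}{g(1)-g(0)}\int_{0}^{1}\left(F_{t,v}(a,b)-F_{1/2,v}(a,b)\right)g(t)\,dt\le a\nabla_v b. \] In particular, \[ a\sharp b+\frac{4}{g(1)-g(0)}\left[\int_{0}^{1}g(t)F_{t,1/2}(a,b)\,dt-F_{1/2,1/2}(a,b)\int_{0}^{1}g(t)\,dt\right]\le a\nabla b. \]
   Context: For $a,b\ge 0$ and $0\le v\le 1$: $a\sharp_v b:=a^{1-v}b^{v}$ (weighted geometric mean) and $a\nabla_v b:=(1-v)a+vb$ (weighted arithmetic mean); $a\sharp b:=a\sharp_{1/2}b=\sqrt{ab}$ and $a\nabla b:=a\nabla_{1/2}b=\frac{a+b}{2}$. The Heron mean is $F_{t,v}(a,b):=(1-t)(a\sharp_v b)+t(a\nabla_v b)$ for $0\le t,v\le 1$. *)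

From Stdlib Require Import Reals.
From Coquelicot Require Import Coquelicot.
Open Scope R_scope.

(* Real power x^y for x >= 0, with the conventions 0^0 = 1 and 0^y = 0 for y <> 0
   (Stdlib's Rpower gives Rpower 0 y = 1, which is wrong for y > 0). *)
Definition rpow (x y : R) : R :=
  if Rle_dec x 0 then (if Req_EM_T y 0 then 1 else 0) else Rpower x y.

Definition gmean (v a b : R) : R := rpow a (1 - v) * rpow b v.

Definition amean (v a b : R) : R := (1 - v) * a + v * b.

(* Heron mean F_{t,v}(a,b) = (1-t)(a #_v b) + t (a nabla_v b) *)
Definition heron (t v a b : R) : R := (1 - t) * gmean v a b + t * amean v a b.

From Stdlib Require Import Reals Lra Lia.
From Coquelicot Require Import Coquelicot.
Open Scope R_scope.

(* Since F_{t,v} - F_{1/2,v} = (t - 1/2) (a nabla_v b - a #_v b), the integral is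
   (a nabla_v b - a #_v b) * int_0^1 (t - 1/2) g(t) dt, and the prefactor is nonnegative by
   the weighted AM-GM inequality (convexity of exp).  For nondecreasing g, comparing g(t)
   with g(0) below 1/2 and with g(1) above gives the polynomial majorant
   (t - 1/2) g(t) <= (t - 1/2) g(0) + (g(1) - g(0)) t^2 / 2, whence
   int_0^1 (t - 1/2) g(t) dt <= (g(1) - g(0)) / 6 <= (g(1) - g(0)) / 4.  The second
   inequality is the first one at v = 1/2, after splitting the integral by linearity.
   Integrability of the monotone integrands is proved with step functions on the uniform
   grid of mesh 1/n, whose oscillation telescopes to (f(1) - f(0)) / n. *)

Lemma rpow_0_r x : rpow x 0 = 1.
Proof.
  unfold rpow. destruct (Rle_dec x 0); [destruct (Req_EM_T 0 0); lra|].
  apply Rpower_O; lra.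
Qed.

Lemma rpow_1_r x : 0 <= x -> rpow x 1 = x.
Proof.
  intros hx. unfold rpow. destruct (Rle_dec x 0).
  - destruct (Req_EM_T 1 0); lra.
  - apply Rpower_1; lra.
Qed.

Lemma rpow_0_l y : y <> 0 -> rpow 0 y = 0.
Proof.
  intros hy. unfold rpow. destruct (Rle_dec 0 0); [|lra].
  destruct (Req_EM_T y 0); lra.
Qed.

Lemma rpow_exp x y : 0 < x -> rpow x y = exp (y * ln x).
Proof. intros hx. unfold rpow. destruct (Rle_dec x 0); [lra | reflexivity]. Qed.

Lemma exp_convex x y v : 0 <= v <= 1 ->
  exp ((1 - v) * x + v * y) <= (1 - v) * exp x + v * exp y.
Proof.
  intros hv. set (m := (1 - v) * x + v * y).
  (* tangent line of exp at m, evaluated at x and y *)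
  assert (hx : exp m * (1 + (x - m)) <= exp x).
  { replace (exp x) with (exp m * exp (x - m)) by (rewrite <- exp_plus; f_equal; ring).
    apply Rmult_le_compat_l; [left; apply exp_pos | apply exp_ineq1_le]. }
  assert (hy : exp m * (1 + (y - m)) <= exp y).
  { replace (exp y) with (exp m * exp (y - m)) by (rewrite <- exp_plus; f_equal; ring).
    apply Rmult_le_compat_l; [left; apply exp_pos | apply exp_ineq1_le]. }
  assert (hm : exp m = (1 - v) * (exp m * (1 + (x - m))) + v * (exp m * (1 + (y - m))))
    by (unfold m; ring).
  rewrite hm at 1. nra.
Qed.

Lemma gmean_le_amean v a b : 0 <= a -> 0 <= b -> 0 <= v <= 1 ->
  gmean v a b <= amean v a b.
Proof.
  intros ha hb hv. unfold gmean, amean.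
  destruct (Req_dec v 0) as [->|hv0].
  { rewrite Rminus_0_r, rpow_1_r, rpow_0_r by lra. lra. }
  destruct (Req_dec v 1) as [->|hv1].
  { rewrite Rminus_diag, rpow_1_r, rpow_0_r by lra. lra. }
  destruct (Req_dec a 0) as [->|ha0].
  { rewrite rpow_0_l by lra. nra. }
  destruct (Req_dec b 0) as [->|hb0].
  { rewrite (rpow_0_l v) by lra. nra. }
  rewrite !rpow_exp, <- exp_plus by lra.
  rewrite <- (exp_ln a) at 2 by lra. rewrite <- (exp_ln b) at 2 by lra.
  apply exp_convex; lra.
Qed.

Lemma heron_sub t s v a b :
  heron t v a b - heron s v a b = (t - s) * (amean v a b - gmean v a b).
Proof. unfold heron. ring. Qed.

Lemma IsStepFun_const_on (F : R -> R) a b c :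
  a <= b -> (forall x, a < x < b -> F x = c) -> IsStepFun F a b.
Proof.
  intros hab hF. exists (cons a (cons b nil)), (cons c nil).
  unfold adapted_couple. repeat split; simpl.
  - intros i hi. replace i with 0%nat by (simpl in hi; lia). exact hab.
  - now rewrite Rmin_left.
  - now rewrite Rmax_right.
  - intros i hi. replace i with 0%nat by (simpl in hi; lia). exact hF.
Qed.

Lemma RiemannInt_SF_const_on (F : R -> R) a b c (pr : IsStepFun F a b) :
  a <= b -> (forall x, a < x < b -> F x = c) ->
  RiemannInt_SF (mkStepFun pr) = c * (b - a).
Proof.
  intros hab hF. rewrite <- (StepFun_P18 a b c).
  apply Rle_antisym; apply StepFun_P37; trivial; intros x hx; simpl;
    unfold fct_cte; rewrite hF; trivial; lra.
Qed.

Section Grid.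
Variable n : nat.
Hypothesis n_pos : (0 < n)%nat.

Definition grid_index (t : R) : R := IZR (Zfloor (INR n * t)).

Let INR_n_pos : 0 < INR n.
Proof. apply lt_0_INR; exact n_pos. Qed.

Lemma grid_index_cell (k : nat) t :
  INR k / INR n < t < INR (S k) / INR n -> grid_index t = INR k.
Proof.
  intros [hl hr]. unfold grid_index.
  rewrite (Zfloor_eq (Z.of_nat k)), <- INR_IZR_INZ; [reflexivity|].
  rewrite <- INR_IZR_INZ, Rmult_comm.
  rewrite S_INR in hr. apply Rlt_div_l in hl; apply Rlt_div_r in hr; lra.
Qed.

Lemma grid_index_bounds t : 0 <= t ->
  0 <= grid_index t /\ grid_index t / INR n <= t < (grid_index t + 1) / INR n.
Proof.
  intros ht. unfold grid_index.
  pose proof (Zfloor_bound (INR n * t)) as hb.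
  assert (h0 : (0 <= Zfloor (INR n * t))%Z) by (apply Zfloor_lub; simpl; nra).
  apply IZR_le in h0.
  split; [exact h0|split].
  - apply Rle_div_l; lra.
  - apply Rlt_div_r; lra.
Qed.

Let grid_mono (k : nat) : INR k / INR n <= INR (S k) / INR n.
Proof. apply Rmult_le_compat_r; [left; apply Rinv_0_lt_compat; lra | rewrite S_INR; lra]. Qed.

Lemma IsStepFun_grid (G : R -> R) (k : nat) : (k <= n)%nat ->
  IsStepFun (fun t => G (grid_index t)) 0 (INR k / INR n).
Proof.
  induction k as [|k IH]; intros hk.
  - apply (IsStepFun_const_on _ _ _ 0); simpl; rewrite Rdiv_0_l; [lra | intros x hx; lra].
  - apply (StepFun_P46 (IH ltac:(lia))).
    apply (IsStepFun_const_on _ _ _ (G (INR k))); [apply grid_mono|].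
    intros x hx. now rewrite (grid_index_cell k).
Qed.

Lemma RiemannInt_SF_grid_telescope (u : R -> R) (k : nat) (b : R)
  (pr : IsStepFun (fun t => u (grid_index t + 1) - u (grid_index t)) 0 b) :
  (k <= n)%nat -> b = INR k / INR n -> RiemannInt_SF (mkStepFun pr) = (u (INR k) - u 0) / INR n.
Proof.
  revert b pr; induction k as [|k IH]; intros b pr hk ->.
  - rewrite (RiemannInt_SF_const_on _ _ _ 0); simpl; rewrite Rdiv_0_l; [lra | lra | intros x hx; lra].
  - set (c := u (INR k + 1) - u (INR k)).
    pose proof (IsStepFun_grid (fun j => u (j + 1) - u j) k ltac:(lia)) as pr1.
    assert (hcell : forall x, INR k / INR n < x < INR (S k) / INR n ->
                     u (grid_index x + 1) - u (grid_index x) = c)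
      by (intros x hx; now rewrite (grid_index_cell k)).
    pose proof (IsStepFun_const_on _ _ _ c (grid_mono k) hcell) as pr2.
    rewrite <- (StepFun_P43 pr1 pr2 pr), (IH _ pr1 ltac:(lia) eq_refl),
      (RiemannInt_SF_const_on _ _ _ c pr2 (grid_mono k) hcell).
    unfold c. rewrite S_INR. field. lra.
Qed.

End Grid.

Lemma grid_sandwich (f : R -> R) (n : nat) t :
  (forall x y, 0 <= x -> x <= y -> y <= 1 -> f x <= f y) -> (0 < n)%nat -> 0 <= t <= 1 ->
  f (Rmin 1 (grid_index n t / INR n)) <= f t <= f (Rmin 1 ((grid_index n t + 1) / INR n)).
Proof.
  intros hf n_pos ht.
  destruct (grid_index_bounds n n_pos t ltac:(lra)) as (h0 & hl & hr).
  assert (0 <= grid_index n t / INR n)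
    by (apply Rdiv_le_0_compat; [lra | apply lt_0_INR; lia]).
  pose proof (Rmin_r 1 (grid_index n t / INR n)).
  split; apply hf; try lra.
  - apply Rmin_glb; lra.
  - apply Rmin_glb; lra.
  - apply Rmin_l.
Qed.

Lemma Riemann_integrable_nondecreasing (f : R -> R) :
  (forall x y, 0 <= x -> x <= y -> y <= 1 -> f x <= f y) -> Riemann_integrable f 0 1.
Proof.
  intros hf eps.
  assert (h01 : f 0 <= f 1) by (apply hf; lra).
  destruct (nfloor_ex ((f 1 - f 0) / eps)) as [m hm].
  { apply Rdiv_le_0_compat; [lra | apply cond_pos]. }
  set (n := S m).
  assert (n_pos : (0 < n)%nat) by lia.
  assert (hn : 0 < INR n) by (apply lt_0_INR; lia).
  assert (hnn : INR n / INR n = 1) by (field; lra).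
  (* the clamp only matters at t = 1, whose grid index is n *)
  set (u := fun j => f (Rmin 1 (j / INR n))).
  pose proof (IsStepFun_grid n n_pos u n (Nat.le_refl n)) as pr_phi.
  pose proof (IsStepFun_grid n n_pos (fun j => u (j + 1) - u j) n (Nat.le_refl n)) as pr_psi.
  rewrite hnn in pr_phi, pr_psi.
  exists (mkStepFun pr_phi), (mkStepFun pr_psi). split.
  - intros t ht. rewrite Rmin_left, Rmax_right in ht by lra. simpl.
    pose proof (grid_sandwich f n t hf n_pos ht).
    unfold u. rewrite Rabs_pos_eq; lra.
  - rewrite (RiemannInt_SF_grid_telescope n n_pos u n 1 pr_psi (Nat.le_refl n) (eq_sym hnn)).
    unfold u. rewrite hnn, Rdiv_0_l, Rmin_left, Rmin_right by lra.
    rewrite Rabs_pos_eq by (apply Rdiv_le_0_compat; lra).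
    apply Rlt_div_l; [exact hn|].
    destruct hm as [_ hm]. apply Rlt_div_l in hm; [| apply cond_pos].
    unfold n. rewrite S_INR. lra.
Qed.

Lemma ex_RInt_nondecreasing (f : R -> R) :
  (forall x y, 0 <= x -> x <= y -> y <= 1 -> f x <= f y) -> ex_RInt f 0 1.
Proof. intros hf. apply ex_RInt_Reals_1, Riemann_integrable_nondecreasing, hf. Qed.

Lemma ex_RInt_Rmult_l (k : R) (f : R -> R) a b :
  ex_RInt f a b -> ex_RInt (fun t => k * f t) a b.
Proof. exact (ex_RInt_scal f a b k). Qed.

Lemma RInt_Rmult_l (k : R) (f : R -> R) a b :
  ex_RInt f a b -> RInt (fun t => k * f t) a b = k * RInt f a b.
Proof. exact (RInt_scal f a b k). Qed.

Lemma ex_RInt_Rplus (f h : R -> R) a b :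
  ex_RInt f a b -> ex_RInt h a b -> ex_RInt (fun t => f t + h t) a b.
Proof. exact (ex_RInt_plus f h a b). Qed.

Lemma RInt_Rplus (f h : R -> R) a b :
  ex_RInt f a b -> ex_RInt h a b -> RInt (fun t => f t + h t) a b = RInt f a b + RInt h a b.
Proof. exact (RInt_plus f h a b). Qed.

Section CenteredMoment.
Variable g : R -> R.
Hypothesis g_nondecr : forall x y, 0 <= x -> x <= y -> y <= 1 -> g x <= g y.

Lemma ex_RInt_centered : ex_RInt (fun t => (t - 1/2) * g t) 0 1.
Proof.
  (* [t * (g t - g 0)] is nondecreasing, as a product of nonnegative nondecreasing factors *)
  apply (ex_RInt_ext (fun t => (t * (g t - g 0) + g 0 * t) + - (1/2) * g t)).
  { intros t _. simpl. ring. }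
  apply ex_RInt_Rplus; [apply ex_RInt_Rplus|].
  - apply ex_RInt_nondecreasing. intros x y hx hxy hy.
    pose proof (g_nondecr 0 x ltac:(lra) hx ltac:(lra)).
    pose proof (g_nondecr x y hx hxy hy). nra.
  - apply ex_RInt_Rmult_l, (ex_RInt_continuous (V := R_CompleteNormedModule)).
    intros; apply continuous_id.
  - apply ex_RInt_Rmult_l, ex_RInt_nondecreasing, g_nondecr.
Qed.

Lemma centered_le_majorant t : 0 <= t <= 1 ->
  (t - 1/2) * g t <= (t - 1/2) * g 0 + (g 1 - g 0) * t ^ 2 / 2.
Proof.
  intros ht.
  assert (h01 : 0 <= g 1 - g 0) by (pose proof (g_nondecr 0 1); lra).
  destruct (Rle_dec (1/2) t).
  - pose proof (g_nondecr t 1 ltac:(lra) ltac:(lra) ltac:(lra)).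
    assert (0 <= (g 1 - g 0) * (t - 1) ^ 2 / 2) by (pose proof (pow2_ge_0 (t - 1)); nra).
    nra.
  - pose proof (g_nondecr 0 t ltac:(lra) ltac:(lra) ltac:(lra)).
    assert (0 <= (g 1 - g 0) * t ^ 2 / 2) by (pose proof (pow2_ge_0 t); nra).
    nra.
Qed.

Lemma RInt_centered_le : RInt (fun t => (t - 1/2) * g t) 0 1 <= (g 1 - g 0) / 6.
Proof.
  set (k := fun t => (t - 1/2) * g 0 + (g 1 - g 0) * t ^ 2 / 2).
  set (K := fun t => g 0 * (t ^ 2 / 2 - t / 2) + (g 1 - g 0) * t ^ 3 / 6).
  assert (hK : is_RInt k 0 1 (K 1 - K 0)).
  { apply (is_RInt_derive (V := R_CompleteNormedModule) K k).
    - intros x _. unfold K, k. auto_derive; [easy | field].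
    - intros x _. apply (ex_derive_continuous k). unfold k. auto_derive. easy. }
  apply Rle_trans with (RInt k 0 1).
  - apply RInt_le; [lra | apply ex_RInt_centered | now exists (K 1 - K 0) |].
    intros t ht. apply centered_le_majorant. lra.
  - rewrite (is_RInt_unique _ _ _ _ hK). unfold K. lra.
Qed.

End CenteredMoment.

Lemma ex_RInt_heron_gap a b v (g : R -> R) :
  (forall x y, 0 <= x -> x <= y -> y <= 1 -> g x <= g y) ->
  ex_RInt (fun t => (heron t v a b - heron (1/2) v a b) * g t) 0 1.
Proof.
  intros hg. apply (ex_RInt_ext (fun t => (amean v a b - gmean v a b) * ((t - 1/2) * g t))).
  - intros t _. simpl. rewrite heron_sub. ring.
  - apply ex_RInt_Rmult_l, ex_RInt_centered, hg.
Qed.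

Lemma RInt_heron_gap a b v (g : R -> R) :
  (forall x y, 0 <= x -> x <= y -> y <= 1 -> g x <= g y) ->
  RInt (fun t => (heron t v a b - heron (1/2) v a b) * g t) 0 1
  = (amean v a b - gmean v a b) * RInt (fun t => (t - 1/2) * g t) 0 1.
Proof.
  intros hg. rewrite <- RInt_Rmult_l by (apply ex_RInt_centered, hg).
  apply RInt_ext. intros t _. simpl. rewrite heron_sub. ring.
Qed.

Lemma heron_gap_bound a b v (g : R -> R) :
  0 <= a -> 0 <= b -> 0 <= v <= 1 ->
  (forall x y, 0 <= x -> x <= y -> y <= 1 -> g x <= g y) -> g 1 <> g 0 ->
  gmean v a b + 4 / (g 1 - g 0) *
      RInt (fun t => (heron t v a b - heron (1/2) v a b) * g t) 0 1
    <= amean v a b.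
Proof.
  intros ha hb hv hg hg10. rewrite RInt_heron_gap by exact hg.
  assert (hc : 0 < g 1 - g 0) by (pose proof (hg 0 1); lra).
  pose proof (gmean_le_amean v a b ha hb hv) as hD.
  pose proof (RInt_centered_le g hg) as hI.
  set (D := amean v a b - gmean v a b) in *.
  set (I := RInt (fun t => (t - 1/2) * g t) 0 1) in *.
  assert (hDI : 4 / (g 1 - g 0) * (D * I) <= 4 / (g 1 - g 0) * (D * ((g 1 - g 0) / 6))).
  { apply Rmult_le_compat_l; [apply Rdiv_le_0_compat; lra |].
    apply Rmult_le_compat_l; unfold D; lra. }
  replace (4 / (g 1 - g 0) * (D * ((g 1 - g 0) / 6))) with (2 / 3 * D) in hDI by (field; lra).
  unfold D in *. lra.
Qed.

Theorem theorem2p1 (a b v : R) (g : R -> R)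
  (ha : 0 <= a) (hb : 0 <= b) (hv0 : 0 <= v) (hv1 : v <= 1)
  (hg : forall x y, 0 <= x -> x <= y -> y <= 1 -> g x <= g y)
  (hg10 : g 1 <> g 0) :
  gmean v a b + 4 / (g 1 - g 0) *
      RInt (fun t => (heron t v a b - heron (1/2) v a b) * g t) 0 1
    <= amean v a b
  /\
  gmean (1/2) a b + 4 / (g 1 - g 0) *
      (RInt (fun t => g t * heron t (1/2) a b) 0 1
       - heron (1/2) (1/2) a b * RInt g 0 1)
    <= amean (1/2) a b.
Proof.
  split; [apply heron_gap_bound; auto|].
  assert (hsplit : RInt (fun t => g t * heron t (1/2) a b) 0 1
    = heron (1/2) (1/2) a b * RInt g 0 1
      + RInt (fun t => (heron t (1/2) a b - heron (1/2) (1/2) a b) * g t) 0 1).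
  { rewrite <- RInt_Rmult_l, <- RInt_Rplus.
    - apply RInt_ext. intros t _. simpl. ring.
    - apply ex_RInt_Rmult_l, ex_RInt_nondecreasing, hg.
    - apply ex_RInt_heron_gap, hg.
    - apply ex_RInt_nondecreasing, hg. }
  rewrite hsplit, Rplus_minus_l.
  apply heron_gap_bound; auto; lra.
Qed.
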